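(* Let $x^*\in\mathbb{R}^n$ satisfy $Ax^*=b$, and let $x_1,\ldots,x_\ell\in\mathbb{R}^n$ be points with \[x_\ell=\operatorname{argmin}_{\xi\in\operatorname{aff}(x_1,\ldots,x_\ell)}\|\xi-x^*\|^2.\] If $P(x_\ell)\in\operatorname{aff}(x_1,\ldots,x_\ell)$, then $r(x_\ell)=0$, $P(x_\ell)=x_\ell$ and $Ax_\ell=b$.
   Context: Let $A=(a_1,\ldots,a_m)^T\in\mathbb{R}^{m\times n}$ with rows $a_j\in\mathbb{R}^n\setminus\{0\}$, and let $b\in\mathbb{R}^m$ lie in the range of $A$. Norms are Euclidean. For $j=1,\ldots,m$ define the projectors $P_j:\mathbb{R}^n\to\mathbb{R}^n$, $P_j(x)=\big(I-\frac{a_ja_j^T}{\|a_j\|^2}\big)x+\frac{b_j}{\|a_j\|^2}a_j$ (the orthogonal projection onto $\{z:a_j^Tz=b_j\}$), and the Kaczmarz cycle $P=P_m\circ\cdots\circ P_1$. The residual $r:\mathbb{R}^n\to\mathbb{R}^m$ is defined by $r_1(x)=(a_1^Tx-b_1)/\|a_1\|$ and $r_j(x)=(a_j^T(P_{j-1}\circ\cdots\circ P_1)(x)-b_j)/\|a_j\|$ for $j=2,\ldots,m$. $\operatorname{aff}(\cdot)$ denotes the affine hull. *)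

(* Vectors in R^n are column vectors 'cV[R]_n; R : rcfType
   (a real closed field, so that Euclidean norms Num.sqrt exist). *)
From HB Require Import structures.
From mathcomp Require Import all_boot all_order all_algebra.
Set Implicit Arguments. Unset Strict Implicit. Unset Printing Implicit Defensive.
Import Order.TTheory GRing.Theory Num.Theory.
Local Open Scope ring_scope.

Section Kaczmarz.
Variables (R : rcfType) (m n : nat).

Definition dotv (u v : 'cV[R]_n) : R := \sum_(i < n) u i 0 * v i 0.
Definition norm2 (u : 'cV[R]_n) : R := dotv u u.
Definition enorm (u : 'cV[R]_n) : R := Num.sqrt (norm2 u).

Definition arow (A : 'M[R]_(m, n)) (j : 'I_m) : 'cV[R]_n := (row j A)^T.

(* orthogonal projection onto {z : a_j^T z = b_j} *)
Definition Proj (A : 'M[R]_(m, n)) (b : 'cV[R]_m) (j : 'I_m) (x : 'cV[R]_n)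
  : 'cV[R]_n :=
  x - (dotv (arow A j) x / norm2 (arow A j)) *: arow A j
    + (b j 0 / norm2 (arow A j)) *: arow A j.

(* Pcomp k = P_k o ... o P_1 (1-based as in the paper), Pcomp 0 = id;
   indices k > m are irrelevant since only k <= m is used. *)
Fixpoint Pcomp (A : 'M[R]_(m, n)) (b : 'cV[R]_m) (k : nat) (x : 'cV[R]_n)
  : 'cV[R]_n :=
  match k with
  | 0 => x
  | k'.+1 => match insub k' with
             | Some j => Proj A b j (Pcomp A b k' x)
             | None => Pcomp A b k' x
             end
  end.

Definition Kcycle (A : 'M[R]_(m, n)) (b : 'cV[R]_m) (x : 'cV[R]_n) : 'cV[R]_n :=
  Pcomp A b m x.

(* residual: r_j(x) = (a_j^T (P_{j-1} o ... o P_1)(x) - b_j) / ||a_j||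
   (j 1-based in the paper; here j : 'I_m is 0-based so the prefix has length j) *)
Definition resid (A : 'M[R]_(m, n)) (b : 'cV[R]_m) (x : 'cV[R]_n) : 'cV[R]_m :=
  \col_(j < m) ((dotv (arow A j) (Pcomp A b j x) - b j 0) / enorm (arow A j)).

Definition in_aff (l : nat) (xs : 'I_l -> 'cV[R]_n) (z : 'cV[R]_n) : Prop :=
  exists c : 'I_l -> R, \sum_(i < l) c i = 1 /\ z = \sum_(i < l) c i *: xs i.

End Kaczmarz.

From HB Require Import structures.
From mathcomp Require Import all_boot all_order all_algebra.
From mathcomp Require Import ring.
Import Order.TTheory GRing.Theory Num.Theory.
Set Implicit Arguments.
Unset Strict Implicit.
Unset Printing Implicit Defensive.
Local Open Scope ring_scope.

(* Each projection P_j moves a point onto a hyperplane containing x*, so by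
   Pythagoras it lowers the squared distance to x* by exactly r_j^2.  Over a
   whole cycle, |P(x) - x*|^2 = |x - x*|^2 - |r(x)|^2.  When x = x_l is the
   point of aff(x_1, ..., x_l) closest to x* and P(x_l) lies in that hull,
   P(x_l) cannot be closer, so r(x_l) = 0; then every P_j fixes x_l. *)

Section InnerProduct.
Variables (R : rcfType) (n : nat).
Implicit Types (u v w : 'cV[R]_n).

Lemma dotvC u v : dotv u v = dotv v u.
Proof. by apply: eq_bigr => i _; rewrite mulrC. Qed.

Lemma dotvDr u v w : dotv u (v + w) = dotv u v + dotv u w.
Proof. by rewrite /dotv -big_split; apply: eq_bigr => i _; rewrite mxE mulrDr. Qed.

Lemma dotvZr u (c : R) v : dotv u (c *: v) = c * dotv u v.
Proof. by rewrite /dotv mulr_sumr; apply: eq_bigr => i _; rewrite mxE mulrCA. Qed.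

Lemma dotvBr u v w : dotv u (v - w) = dotv u v - dotv u w.
Proof. by rewrite dotvDr -scaleN1r dotvZr mulN1r. Qed.

Lemma dotvBl u v w : dotv (v - w) u = dotv v u - dotv w u.
Proof. by rewrite dotvC dotvBr !(dotvC u). Qed.

Lemma dotvZl u (c : R) v : dotv (c *: v) u = c * dotv v u.
Proof. by rewrite dotvC dotvZr dotvC. Qed.

Lemma norm2_ge0 u : 0 <= norm2 u.
Proof. by apply: sumr_ge0 => i _; rewrite -expr2 sqr_ge0. Qed.

Lemma norm2_eq0 u : (norm2 u == 0) = (u == 0).
Proof.
apply/idP/eqP => [/eqP u0|->]; last by rewrite /norm2 /dotv big1 // => i _; rewrite mxE mul0r.
apply/matrixP => i k; rewrite (ord1 k) mxE.
have sq_ge0 (j : 'I_n) : 0 <= u j 0 * u j 0 by rewrite -expr2 sqr_ge0.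
have /eqP := psumr_eq0P (fun j _ => sq_ge0 j) u0 isT (i := i).
by rewrite mulf_eq0 orbb => /eqP.
Qed.

End InnerProduct.

Section KaczmarzStep.
Variables (R : rcfType) (m n : nat) (A : 'M[R]_(m, n)) (b : 'cV[R]_m).

Lemma dotv_arow j x : dotv (arow A j) x = (A *m x) j 0.
Proof. by rewrite /dotv mxE; apply: eq_bigr => k _; rewrite !mxE. Qed.

Lemma norm2_arow_neq0 j : row j A != 0 -> norm2 (arow A j) != 0.
Proof. rewrite norm2_eq0; by apply: contraNneq; rewrite /arow -trmx0 => /trmx_inj ->. Qed.

Lemma Proj_id j z : dotv (arow A j) z = b j 0 -> Proj A b j z = z.
Proof. by move=> e; rewrite /Proj e subrK. Qed.

Lemma norm2_Proj_sub xstar j z : A *m xstar = b -> norm2 (arow A j) != 0 ->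
  norm2 (Proj A b j z - xstar) =
  norm2 (z - xstar) - (dotv (arow A j) z - b j 0) ^+ 2 / norm2 (arow A j).
Proof.
move=> hxstar; set a := arow A j; set N := norm2 a => N0.
set d := dotv a z; set bj : R := b j 0.
have a_xstar : dotv a xstar = bj by rewrite dotv_arow hxstar.
have -> : Proj A b j z - xstar = (z - xstar) - ((d - bj) / N) *: a.
  by apply/matrixP => i k; rewrite /Proj -/a -/N -/d !mxE /bj; ring.
rewrite /norm2 !dotvBl !dotvBr !dotvZl !dotvZr -/(norm2 a) -/N.
rewrite (dotvC z a) (dotvC xstar a) (dotvC xstar z) -/d a_xstar.
by field.
Qed.

(* The squared distance gained by the k-th projection of the cycle; it is
   r_k(x)^2 for k < m, and 0 beyond the cycle where Pcomp does nothing. *)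
Definition Pcomp_gain (x : 'cV[R]_n) (k : nat) : R :=
  if insub k is Some j then
    (dotv (arow A j) (Pcomp A b k x) - b j 0) ^+ 2 / norm2 (arow A j)
  else 0.

Lemma Pcomp_gain_ord x (j : 'I_m) : Pcomp_gain x j =
  (dotv (arow A j) (Pcomp A b j x) - b j 0) ^+ 2 / norm2 (arow A j).
Proof. by rewrite /Pcomp_gain valK. Qed.

Lemma Pcomp_gain_ge0 x k : 0 <= Pcomp_gain x k.
Proof.
rewrite /Pcomp_gain; case: insub => [j|] //.
by rewrite divr_ge0 ?sqr_ge0 ?norm2_ge0.
Qed.

Lemma Pcomp_id x :
  (forall j : 'I_m, dotv (arow A j) (Pcomp A b j x) = b j 0) ->
  forall k, Pcomp A b k x = x.
Proof.
move=> hres; elim=> [|k IH] //=.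
case: insubP => [j _ kj|_] //.
by rewrite IH Proj_id // -IH -kj hres.
Qed.

Hypothesis rowsA_neq0 : forall j : 'I_m, row j A != 0.

Lemma norm2_Pcomp_sub xstar x k : A *m xstar = b ->
  norm2 (Pcomp A b k x - xstar) + \sum_(i < k) Pcomp_gain x i = norm2 (x - xstar).
Proof.
move=> hxstar; elim: k => [|k IH]; first by rewrite big_ord0 addr0.
rewrite big_ord_recr /= addrA -{}IH /Pcomp_gain.
case: insub => [j|]; last by rewrite addr0.
by rewrite norm2_Proj_sub ?norm2_arow_neq0 // addrAC subrK.
Qed.

Lemma Kcycle_closer_resid xstar x : A *m xstar = b ->
  norm2 (x - xstar) <= norm2 (Kcycle A b x - xstar) ->
  forall j : 'I_m, dotv (arow A j) (Pcomp A b j x) = b j 0.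
Proof.
move=> hxstar; rewrite -(norm2_Pcomp_sub x m hxstar) gerDl => sum_le0 j.
have sum0 : \sum_(i < m) Pcomp_gain x i = 0.
  by apply/eqP; rewrite eq_le sum_le0 sumr_ge0 // => i _; exact: Pcomp_gain_ge0.
have /eqP := psumr_eq0P (fun (i : 'I_m) _ => Pcomp_gain_ge0 x i) sum0 isT (i := j).
rewrite Pcomp_gain_ord mulf_eq0 invr_eq0 (negbTE (norm2_arow_neq0 (rowsA_neq0 j))).
by rewrite orbF sqrf_eq0 subr_eq0 => /eqP.
Qed.

End KaczmarzStep.

Theorem lemma6 (R : rcfType) (m n : nat) (A : 'M[R]_(m, n)) (b : 'cV[R]_m)
  (hrows : forall j : 'I_m, row j A != 0)
  (hb : exists y : 'cV[R]_n, A *m y = b)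
  (xstar : 'cV[R]_n) (hxstar : A *m xstar = b)
  (l : nat) (xs : 'I_l.+1 -> 'cV[R]_n)
  (hmin : forall xi : 'cV[R]_n, in_aff xs xi ->
            norm2 (xs ord_max - xstar) <= norm2 (xi - xstar))
  (hP : in_aff xs (Kcycle A b (xs ord_max))) :
  resid A b (xs ord_max) = 0 /\
  Kcycle A b (xs ord_max) = xs ord_max /\
  A *m xs ord_max = b.
Proof.
have hres := Kcycle_closer_resid hrows hxstar (hmin _ hP).
have hfix := Pcomp_id hres.
split; last split.
- by apply/matrixP => j k; rewrite !mxE hres subrr mul0r.
- exact: hfix.
- by apply/matrixP => j k; rewrite (ord1 k) -dotv_arow -(hfix j) hres.
Qed.
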